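(* Let $(\mathcal A,\mathcal B)$ be a cotorsion pair in $\mathrm{Mod}\text{-}R$ such that $B^{(\omega)}\in\mathcal B$ for every $B\in\mathcal B$. Let $h:A\to M$ be an $\mathcal A$-cover. Then $h$ is an isomorphism if and only if the inclusion $\mathrm{Ker}(h)\subseteq A$ is locally split and $M^{(\omega)}$ has an $\mathcal A$-cover.
   Context: All modules are right $R$-modules over a ring $R$; a cotorsion pair is $(\mathcal A,\mathcal B)$ with $\mathcal A={}^{\perp}\mathcal B$, $\mathcal B=\mathcal A^{\perp}$ (w.r.t. $\mathrm{Ext}^1_R$). An inclusion $K\subseteq A$ is locally split if for every $x\in K$ there is a homomorphism $g:A\to K$ with $g(x)=x$. Covers are in the sense of Enochs. *)

From HB Require Import structures.
From mathcomp Require Import all_boot all_algebra.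
From mathcomp Require Import boolp.
Set Implicit Arguments. Unset Strict Implicit. Unset Printing Implicit Defensive.
Import GRing.Theory.
Local Open Scope ring_scope.

(* Right R-modules are modelled as left modules over the converse ring R^c:
   rmodType R := lmodType R^c. *)
Notation rmodType R := (lmodType (R^c)).

Section DirectSum.
Variables (S : pzRingType) (M : lmodType S).

Definition fin_supp (f : nat -> M) := exists N : nat, forall n, (N <= n)%N -> f n = 0.

Record dsum_omega := DSumOmega { dsum_fun :> nat -> M; dsum_finP : fin_supp dsum_fun }.

HB.instance Definition _ := gen_eqMixin dsum_omega.
HB.instance Definition _ := gen_choiceMixin dsum_omega.

Lemma dsum_eq (u v : dsum_omega) : (forall n, u n = v n) -> u = v.
Proof.
case: u v => [f fP] [g gP] /= fg.
have efg : f = g by apply: funext.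
subst g; congr DSumOmega; exact: Prop_irrelevance.
Qed.

Lemma fin_supp0 : fin_supp (fun _ => 0).
Proof. by exists 0%N. Qed.

Lemma fin_suppD (u v : dsum_omega) : fin_supp (fun n => u n + v n).
Proof.
case: (dsum_finP u) => N HN; case: (dsum_finP v) => K HK.
exists (maxn N K) => n hn.
rewrite HN ?HK ?addr0 //; apply: leq_trans hn; by rewrite ?leq_maxl ?leq_maxr.
Qed.

Lemma fin_suppN (u : dsum_omega) : fin_supp (fun n => - u n).
Proof. case: (dsum_finP u) => N HN; exists N => n hn; by rewrite HN ?oppr0. Qed.

Lemma fin_suppZ (a : S) (u : dsum_omega) : fin_supp (fun n => a *: u n).
Proof. case: (dsum_finP u) => N HN; exists N => n hn; by rewrite HN ?scaler0. Qed.

Definition dsum_zero := DSumOmega fin_supp0.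
Definition dsum_add u v := DSumOmega (fin_suppD u v).
Definition dsum_opp u := DSumOmega (fin_suppN u).
Definition dsum_scale a u := DSumOmega (fin_suppZ a u).

Lemma dsum_addA : associative dsum_add.
Proof. by move=> u v w; apply: dsum_eq => n /=; rewrite addrA. Qed.
Lemma dsum_addC : commutative dsum_add.
Proof. by move=> u v; apply: dsum_eq => n /=; rewrite addrC. Qed.
Lemma dsum_add0 : left_id dsum_zero dsum_add.
Proof. by move=> u; apply: dsum_eq => n /=; rewrite add0r. Qed.
Lemma dsum_addN : left_inverse dsum_zero dsum_opp dsum_add.
Proof. by move=> u; apply: dsum_eq => n /=; rewrite addNr. Qed.

HB.instance Definition _ :=
  GRing.isZmodule.Build dsum_omega dsum_addA dsum_addC dsum_add0 dsum_addN.

Lemma dsum_scaleA a b v : dsum_scale a (dsum_scale b v) = dsum_scale (a * b) v.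
Proof. by apply: dsum_eq => n /=; rewrite scalerA. Qed.
Lemma dsum_scale1 : left_id 1 dsum_scale.
Proof. by move=> v; apply: dsum_eq => n /=; rewrite scale1r. Qed.
Lemma dsum_scaleDr : right_distributive dsum_scale +%R.
Proof. by move=> a u v; apply: dsum_eq => n /=; rewrite scalerDr. Qed.
Lemma dsum_scaleDl v : {morph dsum_scale^~ v : a b / a + b}.
Proof. by move=> a b; apply: dsum_eq => n /=; rewrite scalerDl. Qed.

HB.instance Definition _ := GRing.Zmodule_isLmodule.Build S dsum_omega
  dsum_scaleA dsum_scale1 dsum_scaleDr dsum_scaleDl.

End DirectSum.

Notation "M ^(omega)" := (dsum_omega M) (at level 2, format "M ^(omega)").

Section ModuleNotions.
Variable (S : pzRingType).

(* Ext^1_S(A, B) = 0 in the Yoneda sense: every extension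
   0 -> B --i--> X --p--> A -> 0 splits. *)
Definition Ext1_zero (A B : lmodType S) : Prop :=
  forall (X : lmodType S) (i : {linear B -> X}) (p : {linear X -> A}),
    injective i -> (forall a : A, exists x : X, p x = a) ->
    (forall x : X, p x = 0 <-> exists b : B, x = i b) ->
    exists s : {linear A -> X}, forall a : A, p (s a) = a.

Definition cotorsion_pair (CA CB : lmodType S -> Prop) : Prop :=
  (forall A : lmodType S, CA A <-> (forall B : lmodType S, CB B -> Ext1_zero A B)) /\
  (forall B : lmodType S, CB B <-> (forall A : lmodType S, CA A -> Ext1_zero A B)).

Definition is_precover (CA : lmodType S -> Prop) (A M : lmodType S)
  (h : {linear A -> M}) : Prop :=
  CA A /\
  forall (A' : lmodType S) (f : {linear A' -> M}), CA A' ->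
    exists g : {linear A' -> A}, forall x : A', h (g x) = f x.

Definition is_cover (CA : lmodType S -> Prop) (A M : lmodType S)
  (h : {linear A -> M}) : Prop :=
  is_precover CA h /\
  forall g : {linear A -> A}, (forall x : A, h (g x) = h x) -> bijective g.

Definition has_cover (CA : lmodType S -> Prop) (M : lmodType S) : Prop :=
  exists (A : lmodType S) (h : {linear A -> M}), is_cover CA h.

(* The inclusion K = Ker h ⊆ A is locally split: for every x in K there is
   g : A -> K with g x = x (g viewed as a map into A with image in K). *)
Definition kernel_locally_split (A M : lmodType S) (h : {linear A -> M}) : Prop :=
  forall x : A, h x = 0 ->
    exists g : {linear A -> A}, (forall y : A, h (g y) = 0) /\ g x = x.

Definition is_iso (A M : lmodType S) (h : {linear A -> M}) : Prop := bijective h.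

End ModuleNotions.

From HB Require Import structures.
From mathcomp Require Import all_boot all_algebra.
From mathcomp Require Import boolp.
Set Implicit Arguments. Unset Strict Implicit. Unset Printing Implicit Defensive.
Import GRing.Theory.
Local Open Scope ring_scope.

(** Wakamatsu's lemma puts [K = Ker h] in [CB], hence [K^(omega)] in [CB], so that
    [h^(omega) : A^(omega) -> M^(omega)] is a special [CA]-precover ([CA] is closed
    under countable direct sums).  Since [h] is a cover, every endomorphism of
    [A^(omega)] over [h^(omega)] has automorphisms of [A] as diagonal blocks, and
    clearing the coordinates one at a time shows that it is injective; comparing
    with a [CA]-cover of [M^(omega)] then proves that [h^(omega)] is a cover.
    If [K ⊆ A] is locally split, take [x] in [K] and [g : A -> K] with [g x = x]:
    the endomorphism [w ↦ w - shift (g w)] is over [h^(omega)], hence onto, and a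
    preimage of [(x, 0, 0, ...)] is the constant sequence [x], which has finite
    support only if [x = 0].  Conversely, if [h] is an isomorphism then so is
    [h^(omega)], whose domain lies in [CA]. *)

Section Modules.
Variable S : pzRingType.
Implicit Types U V W A B K M X Y Z : lmodType S.

Definition mk_linear U V (f : U -> V)
    (fP : forall a x y, f (a *: x + y) = a *: f x + f y) : {linear U -> V} :=
  HB.pack f (GRing.isLinear.Build S U V *:%R f fP).

Lemma inj_surj_bij (T1 T2 : Type) (f : T1 -> T2) :
  injective f -> (forall y, exists x, f x = y) -> bijective f.
Proof.
move=> fI fS; pose g y := projT1 (cid (fS y)).
have gK y : f (g y) = y by rewrite /g; case: cid.
by exists g => [x|y]; [apply: fI; rewrite gK | exact: gK].
Qed.

Lemma linear_inverse U V (f : {linear U -> V}) :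
  bijective f -> exists g : {linear V -> U}, cancel f g /\ cancel g f.
Proof.
case=> g fK gK.
have gP a x y : g (a *: x + y) = a *: g x + g y.
  by apply: (can_inj fK); rewrite linearP !gK.
by exists (mk_linear gP).
Qed.

Definition endo_over U V (f : U -> V) (g : U -> U) := forall x, f (g x) = f x.

Lemma endo_over_inv U V (f : U -> V) (g g' : U -> U) :
  endo_over f g -> cancel g' g -> endo_over f g'.
Proof. by move=> fg g'K x; rewrite -{2}(g'K x) fg. Qed.

Lemma scalev_lin V (v : V) a (r r' : S^o) :
  ((a *: r + r' : S^o) : S) *: v = a *: ((r : S) *: v) + (r' : S) *: v.
Proof. by rewrite scalerDl scalerA. Qed.

Definition scalev V (v : V) : {linear S^o -> V} := mk_linear (scalev_lin v).

Lemma lin_inl_lin U V a (x y : U) :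
  ((a *: x + y, 0) : (U * V)%type) = a *: (x, 0) + (y, 0).
Proof. by apply: injective_projections => /=; rewrite ?scaler0 ?addr0. Qed.

Lemma lin_inr_lin U V a (x y : V) :
  ((0, a *: x + y) : (U * V)%type) = a *: (0, x) + (0, y).
Proof. by apply: injective_projections => /=; rewrite ?scaler0 ?addr0. Qed.

Definition lin_inl U V : {linear U -> (U * V)%type} := mk_linear (@lin_inl_lin U V).
Definition lin_inr U V : {linear V -> (U * V)%type} := mk_linear (@lin_inr_lin U V).

(** * Kernels and cokernels *)

Section Kernel.
Variables (U V : lmodType S) (f : {linear U -> V}).

Record kerm := Kerm { kerval : U; kervalP : f kerval = 0 }.

HB.instance Definition _ := gen_eqMixin kerm.
HB.instance Definition _ := gen_choiceMixin kerm.

Lemma kerm_eq (u v : kerm) : kerval u = kerval v -> u = v.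
Proof.
by case: u v => [x xP] [y yP] /= exy; subst y; congr Kerm; exact: Prop_irrelevance.
Qed.

Lemma kermD_subproof (u v : kerm) : f (kerval u + kerval v) = 0.
Proof. by rewrite linearD !kervalP addr0. Qed.
Lemma kermN_subproof (u : kerm) : f (- kerval u) = 0.
Proof. by rewrite linearN kervalP oppr0. Qed.
Lemma kermZ_subproof a (u : kerm) : f (a *: kerval u) = 0.
Proof. by rewrite linearZ_LR kervalP scaler0. Qed.

Definition kerm_zero := Kerm (linear0 f).
Definition kerm_add u v := Kerm (kermD_subproof u v).
Definition kerm_opp u := Kerm (kermN_subproof u).
Definition kerm_scale a u := Kerm (kermZ_subproof a u).

Lemma kerm_addA : associative kerm_add.
Proof. by move=> u v w; apply: kerm_eq; rewrite /= addrA. Qed.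
Lemma kerm_addC : commutative kerm_add.
Proof. by move=> u v; apply: kerm_eq; rewrite /= addrC. Qed.
Lemma kerm_add0 : left_id kerm_zero kerm_add.
Proof. by move=> u; apply: kerm_eq; rewrite /= add0r. Qed.
Lemma kerm_addN : left_inverse kerm_zero kerm_opp kerm_add.
Proof. by move=> u; apply: kerm_eq; rewrite /= addNr. Qed.

HB.instance Definition _ :=
  GRing.isZmodule.Build kerm kerm_addA kerm_addC kerm_add0 kerm_addN.

Lemma kerm_scaleA a b u : kerm_scale a (kerm_scale b u) = kerm_scale (a * b) u.
Proof. by apply: kerm_eq; rewrite /= scalerA. Qed.
Lemma kerm_scale1 : left_id 1 kerm_scale.
Proof. by move=> u; apply: kerm_eq; rewrite /= scale1r. Qed.
Lemma kerm_scaleDr : right_distributive kerm_scale +%R.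
Proof. by move=> a u v; apply: kerm_eq; rewrite /= scalerDr. Qed.
Lemma kerm_scaleDl u : {morph kerm_scale^~ u : a b / a + b}.
Proof. by move=> a b; apply: kerm_eq; rewrite /= scalerDl. Qed.

HB.instance Definition _ := GRing.Zmodule_isLmodule.Build S kerm
  kerm_scaleA kerm_scale1 kerm_scaleDr kerm_scaleDl.

Definition ker_incl : {linear kerm -> U} :=
  @mk_linear kerm U kerval (fun a x y => erefl).

Lemma ker_incl_inj : injective ker_incl.
Proof. by move=> u v; apply: kerm_eq. Qed.

End Kernel.

Section Cokernel.
Variables (U V : lmodType S) (f : {linear U -> V}).

(* An element of the cokernel is a coset [v + im f], stored as a predicate. *)
Definition coset (v : V) : V -> Prop := fun w => exists u, w - v = f u.

Record coker :=
  Coker { coset_pred : V -> Prop; coset_predP : exists v, coset_pred = coset v }.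

HB.instance Definition _ := gen_eqMixin coker.
HB.instance Definition _ := gen_choiceMixin coker.

Lemma coker_eq (c d : coker) : coset_pred c = coset_pred d -> c = d.
Proof.
by case: c d => [P PP] [Q QP] /= ePQ; subst Q; congr Coker; exact: Prop_irrelevance.
Qed.

Definition coker_pi (v : V) : coker := Coker (ex_intro _ v erefl).
Definition coker_repr (c : coker) : V := projT1 (cid (coset_predP c)).

Lemma coker_reprK c : coker_pi (coker_repr c) = c.
Proof. by apply: coker_eq; rewrite /coker_repr; case: cid => v /= ->. Qed.

Lemma coker_pi_eq v w : coker_pi v = coker_pi w <-> exists u, v - w = f u.
Proof.
split=> [evw | [u vw]].
  have : coset v v by exists 0; rewrite subrr linear0.
  by rewrite -[coset v]/(coset_pred (coker_pi v)) evw.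
apply: coker_eq; apply: funext => x; apply: propext; split=> -[u' e].
  by exists (u' + u); rewrite linearD -e -vw addrA subrK.
by exists (u' - u); rewrite linearB -e -vw opprB addrA subrK.
Qed.

Lemma coker_reprP v : exists u, coker_repr (coker_pi v) - v = f u.
Proof. by apply/coker_pi_eq; rewrite coker_reprK. Qed.

Lemma coker_ind (P : coker -> Prop) : (forall v, P (coker_pi v)) -> forall c, P c.
Proof. by move=> Pv c; rewrite -(coker_reprK c). Qed.

Definition coker_zero := coker_pi 0.
Definition coker_add c d := coker_pi (coker_repr c + coker_repr d).
Definition coker_opp c := coker_pi (- coker_repr c).
Definition coker_scale a c := coker_pi (a *: coker_repr c).

Lemma coker_addE v w : coker_add (coker_pi v) (coker_pi w) = coker_pi (v + w).
Proof.
apply/coker_pi_eq; have [u1 e1] := coker_reprP v; have [u2 e2] := coker_reprP w.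
by exists (u1 + u2); rewrite linearD -e1 -e2 opprD addrACA.
Qed.

Lemma coker_oppE v : coker_opp (coker_pi v) = coker_pi (- v).
Proof.
apply/coker_pi_eq; have [u e] := coker_reprP v.
by exists (- u); rewrite -opprD e linearN.
Qed.

Lemma coker_scaleE a v : coker_scale a (coker_pi v) = coker_pi (a *: v).
Proof.
apply/coker_pi_eq; have [u e] := coker_reprP v.
by exists (a *: u); rewrite -scalerBr e linearZ.
Qed.

Lemma coker_addA : associative coker_add.
Proof.
by elim/coker_ind=> u; elim/coker_ind=> v; elim/coker_ind=> w; rewrite !coker_addE addrA.
Qed.
Lemma coker_addC : commutative coker_add.
Proof. by elim/coker_ind=> u; elim/coker_ind=> v; rewrite !coker_addE addrC. Qed.
Lemma coker_add0 : left_id coker_zero coker_add.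
Proof. by elim/coker_ind=> u; rewrite coker_addE add0r. Qed.
Lemma coker_addN : left_inverse coker_zero coker_opp coker_add.
Proof. by elim/coker_ind=> u; rewrite coker_oppE coker_addE addNr. Qed.

HB.instance Definition _ :=
  GRing.isZmodule.Build coker coker_addA coker_addC coker_add0 coker_addN.

Lemma coker_piD v w : coker_pi v + coker_pi w = coker_pi (v + w).
Proof. exact: coker_addE. Qed.

Lemma coker_scaleA a b c : coker_scale a (coker_scale b c) = coker_scale (a * b) c.
Proof. by elim/coker_ind: c => v; rewrite !coker_scaleE scalerA. Qed.
Lemma coker_scale1 : left_id 1 coker_scale.
Proof. by elim/coker_ind=> v; rewrite coker_scaleE scale1r. Qed.
Lemma coker_scaleDr : right_distributive coker_scale +%R.
Proof.
move=> a; elim/coker_ind=> u; elim/coker_ind=> v.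
by rewrite coker_piD !coker_scaleE coker_piD scalerDr.
Qed.
Lemma coker_scaleDl c : {morph coker_scale^~ c : a b / a + b}.
Proof.
by elim/coker_ind: c => v a b; rewrite !coker_scaleE coker_piD scalerDl.
Qed.

HB.instance Definition _ := GRing.Zmodule_isLmodule.Build S coker
  coker_scaleA coker_scale1 coker_scaleDr coker_scaleDl.

Lemma coker_pi_lin a x y : coker_pi (a *: x + y) = a *: coker_pi x + coker_pi y.
Proof. by rewrite -coker_piD -coker_scaleE. Qed.

Definition coker_proj : {linear V -> coker} := mk_linear coker_pi_lin.

Lemma coker_proj_eq0 v : coker_proj v = 0 <-> exists u, v = f u.
Proof. by rewrite coker_pi_eq subr0. Qed.

Lemma coker_proj_surj c : exists v, coker_proj v = c.
Proof. by exists (coker_repr c); exact: coker_reprK. Qed.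

End Cokernel.

(** * Short exact sequences *)

Definition short_exact U V W (i : {linear U -> V}) (p : {linear V -> W}) :=
  [/\ injective i, (forall w, exists v, p v = w) &
      (forall v, p v = 0 <-> exists u, v = i u)].

Lemma factor_epi U V W (p : {linear U -> V}) (g : {linear U -> W}) :
  (forall v, exists u, p u = v) -> (forall u, p u = 0 -> g u = 0) ->
  exists g' : {linear V -> W}, forall u, g' (p u) = g u.
Proof.
move=> p_surj gp; pose pre v := projT1 (cid (p_surj v)).
have preK v : p (pre v) = v by rewrite /pre; case: cid.
have g_fibre u u' : p u = p u' -> g u = g u'.
  by move=> e; apply/eqP; rewrite -subr_eq0 -linearB gp // linearB e subrr.
have g'P a v v' : g (pre (a *: v + v')) = a *: g (pre v) + g (pre v').
  by rewrite -linearP; apply: g_fibre; rewrite linearP !preK.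
by exists (mk_linear g'P) => u /=; apply: g_fibre; rewrite preK.
Qed.

Lemma corestrict U V W (i : {linear U -> W}) (g : {linear V -> W}) :
  injective i -> (forall v, exists u, g v = i u) ->
  exists r : {linear V -> U}, forall v, i (r v) = g v.
Proof.
move=> i_inj gi; pose r v := projT1 (cid (gi v)).
have rP v : g v = i (r v) by rewrite /r; case: cid.
have rlin a v v' : r (a *: v + v') = a *: r v + r v'.
  by apply: i_inj; rewrite linearP -!rP linearP.
by exists (mk_linear rlin) => v /=; rewrite -rP.
Qed.

Section Splitting.
Variables (U V W : lmodType S) (i : {linear U -> V}) (p : {linear V -> W}).
Hypothesis ip : short_exact i p.

Lemma retraction_section (r : {linear V -> U}) : cancel i r ->
  exists s : {linear W -> V}, cancel s p.
Proof.
case: ip => _ p_surj p_ker iK.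
pose e := (idfun \- (i \o r) : {linear V -> V}).
have e_ker v : p v = 0 -> e v = 0 by move=> /p_ker [u ->]; rewrite /= iK subrr.
have [s sP] := factor_epi p_surj e_ker.
exists s => w; have [v <-] := p_surj w.
have pi0 : p (i (r v)) = 0 by apply/p_ker; exists (r v).
by rewrite sP /= linearB pi0 subr0.
Qed.

Lemma section_retraction (s : {linear W -> V}) : cancel s p ->
  exists r : {linear V -> U}, cancel i r.
Proof.
case: ip => i_inj _ p_ker sK.
pose e := (idfun \- (s \o p) : {linear V -> V}).
have e_im v : exists u, e v = i u by apply/p_ker; rewrite /= linearB sK subrr.
have [r rP] := corestrict i_inj e_im.
exists r => u; apply: i_inj; rewrite rP /=.
have -> : p (i u) = 0 by apply/p_ker; exists u.
by rewrite linear0 subr0.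
Qed.

End Splitting.

Lemma coker_lift_exact A Y A' B Z (j : {linear A -> Y}) (q : {linear Y -> A'})
    (i : {linear B -> Z}) (p : {linear Z -> Y}) (s : {linear A -> Z}) :
  short_exact j q -> short_exact i p -> (forall a, p (s a) = j a) ->
  exists q' : {linear coker s -> A'}, short_exact (coker_proj s \o i) q'.
Proof.
move=> [j_inj q_surj q_ker] [i_inj p_surj p_ker] sj.
have pi0 b : p (i b) = 0 by apply/p_ker; exists b.
have qp0 z : coker_proj s z = 0 -> (q \o p) z = 0.
  by move=> /coker_proj_eq0 [a ->] /=; rewrite sj; apply/q_ker; exists a.
have [q' q'P] := factor_epi (@coker_proj_surj _ _ s) qp0.
exists q'; split.
- apply: raddf_inj => b /coker_proj_eq0 [a iba].
  have a0 : a = 0 by apply: j_inj; rewrite -sj -iba pi0 linear0.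
  by apply: i_inj; rewrite iba a0 !linear0.
- move=> a'; have [y <-] := q_surj a'; have [z <-] := p_surj y.
  by exists (coker_proj s z).
- move=> w; have [z <-] := coker_proj_surj w; rewrite q'P /=; split.
    move=> /q_ker [a pz]; have : p (z - s a) = 0 by rewrite linearB pz sj subrr.
    move=> /p_ker [b zb]; exists b; apply/coker_pi_eq; exists a.
    by rewrite -zb opprB addrC subrK.
  case=> b /coker_pi_eq [a e]; apply/q_ker; exists a.
  by have := congr1 p e; rewrite linearB pi0 subr0 sj.
Qed.

Lemma pushout_rel_lin K A X (k : {linear K -> A}) (i : {linear K -> X}) a u v :
  ((k (a *: u + v), - i (a *: u + v)) : (A * X)%type) =
  a *: (k u, - i u) + (k v, - i v).
Proof. by apply: injective_projections; rewrite /= linearP // linearP scalerN -opprD. Qed.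

Definition pushout_rel K A X (k : {linear K -> A}) (i : {linear K -> X}) :
  {linear K -> (A * X)%type} := mk_linear (pushout_rel_lin k i).

Lemma pushout_exact K A X Y (k : {linear K -> A}) (i : {linear K -> X})
    (p : {linear X -> Y}) :
  short_exact i p ->
  exists q : {linear coker (pushout_rel k i) -> Y},
    short_exact (coker_proj (pushout_rel k i) \o lin_inl A X) q.
Proof.
move=> [i_inj p_surj p_ker]; set pi := coker_proj _.
have pi0 u : p (i u) = 0 by apply/p_ker; exists u.
have p0 v : pi v = 0 -> (p \o snd) v = 0.
  by move=> /coker_proj_eq0 [u ->] /=; rewrite linearN pi0 oppr0.
have [q qP] := factor_epi (@coker_proj_surj _ _ (pushout_rel k i)) p0.
exists q; split.
- apply: raddf_inj => a /coker_proj_eq0 [u [-> /esym/eqP]].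
  rewrite oppr_eq0 => /eqP iu0.
  have -> : u = 0 by apply: i_inj; rewrite iu0 linear0.
  by rewrite linear0.
- by move=> y; have [x <-] := p_surj y; exists (pi (0, x)); rewrite qP.
- move=> w; have [[a x] <-] := coker_proj_surj w; rewrite qP /=; split.
    move=> /p_ker [u ->]; exists (a + k u); apply/coker_pi_eq; exists (- u).
    apply: injective_projections => /=; last by rewrite linearN opprK subr0.
    by rewrite linearN opprD addrA subrr sub0r.
  case=> a' /coker_pi_eq [u /(congr1 snd) /=]; rewrite subr0 => ->.
  by rewrite linearN pi0 oppr0.
Qed.

(** * Countable direct sums *)

Section DirectSum.

Lemma dsum_subE U (x y : U^(omega)) n : (x - y) n = x n - y n.
Proof. by []. Qed.

Lemma dsum_oppE U (x : U^(omega)) n : (- x) n = - x n.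
Proof. by []. Qed.

Definition bounded U (w : U^(omega)) N := forall n, (N <= n)%N -> w n = 0.

Lemma dsum_in_fin U (n : nat) (u : U) : fin_supp (fun k => if k == n then u else 0).
Proof. by exists n.+1 => k; case: eqP => // ->; rewrite ltnn. Qed.

Lemma dsum_in_lin U (n : nat) a (x y : U) :
  DSumOmega (dsum_in_fin n (a *: x + y)) =
  a *: DSumOmega (dsum_in_fin n x) + DSumOmega (dsum_in_fin n y).
Proof. by apply: dsum_eq => k /=; case: eqP; rewrite ?scaler0 ?addr0. Qed.

Definition dsum_in U (n : nat) : {linear U -> U^(omega)} := mk_linear (@dsum_in_lin U n).
Arguments dsum_in {U} n.

Lemma dsum_inE U (n : nat) (u : U) k : dsum_in n u k = if k == n then u else 0.
Proof. by []. Qed.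

Definition dsum_proj U (n : nat) : {linear U^(omega) -> U} :=
  @mk_linear _ U (fun w : U^(omega) => w n) (fun a x y => erefl).
Arguments dsum_proj {U} n.

Lemma dmap_fin U V (f : {linear U -> V}) (w : U^(omega)) : fin_supp (fun k => f (w k)).
Proof. by case: (dsum_finP w) => N wN; exists N => k hk; rewrite wN ?linear0. Qed.

Lemma dmap_lin U V (f : {linear U -> V}) a (x y : U^(omega)) :
  DSumOmega (dmap_fin f (a *: x + y)) =
  a *: DSumOmega (dmap_fin f x) + DSumOmega (dmap_fin f y).
Proof. by apply: dsum_eq => k /=; rewrite linearP. Qed.

Definition dmap U V (f : {linear U -> V}) : {linear U^(omega) -> V^(omega)} :=
  mk_linear (dmap_lin f).

Lemma dmapE U V (f : {linear U -> V}) w k : dmap f w k = f (w k).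
Proof. by []. Qed.

Lemma dshift_fin U V (f : {linear U -> V}) (w : U^(omega)) :
  fin_supp (fun k => if k is k'.+1 then f (w k') else 0).
Proof. by case: (dsum_finP w) => N wN; exists N.+1 => -[|k] // hk; rewrite wN ?linear0. Qed.

Lemma dshift_lin U V (f : {linear U -> V}) a (x y : U^(omega)) :
  DSumOmega (dshift_fin f (a *: x + y)) =
  a *: DSumOmega (dshift_fin f x) + DSumOmega (dshift_fin f y).
Proof. by apply: dsum_eq => -[|k] /=; rewrite ?linearP // scaler0 addr0. Qed.

Definition dshift U V (f : {linear U -> V}) : {linear U^(omega) -> V^(omega)} :=
  mk_linear (dshift_lin f).

Lemma dsum_decomp U (w : U^(omega)) N : bounded w N ->
  w = \sum_(0 <= n < N) dsum_in n (w n).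
Proof.
move=> wN; apply: dsum_eq => k; rewrite -[RHS]/(dsum_proj k _) linear_sum /=.
have -> : forall m, \sum_(0 <= n < m) dsum_proj k (dsum_in n (w n)) =
                    if (k < m)%N then w k else 0.
  elim=> [|m IH]; first by rewrite big_geq.
  rewrite big_nat_recr //= IH.
  case: (ltngtP k m) => [kM|kM|->].
  - by rewrite ltnS (ltnW kM) addr0.
  - by rewrite ltnS leqNgt kM addr0.
  - by rewrite ltnSn add0r.
by case: ltnP => // kN; rewrite wN.
Qed.

Lemma dsum_lin_ext U V (f g : {linear U^(omega) -> V}) :
  (forall n u, f (dsum_in n u) = g (dsum_in n u)) -> f =1 g.
Proof.
move=> fg w; case: (dsum_finP w) => N wN.
by rewrite (dsum_decomp wN) !linear_sum; apply: eq_bigr => n _; rewrite fg.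
Qed.

Section Recursor.
Variables (U V : lmodType S) (F : nat -> {linear U -> V}).

Lemma sum_bounded_le (w : U^(omega)) N N' : bounded w N -> (N <= N')%N ->
  \sum_(0 <= n < N') F n (w n) = \sum_(0 <= n < N) F n (w n).
Proof.
move=> wN le; rewrite (big_cat_nat (n := N)) //=.
rewrite [X in _ + X]big1_seq ?addr0 // => n /andP [_]; rewrite mem_index_iota.
by case/andP=> hn _; rewrite wN // linear0.
Qed.

Lemma sum_bounded_eq (w : U^(omega)) N N' : bounded w N -> bounded w N' ->
  \sum_(0 <= n < N) F n (w n) = \sum_(0 <= n < N') F n (w n).
Proof.
move=> wN wN'.
by rewrite -(sum_bounded_le wN (leq_maxl N N')) (sum_bounded_le wN' (leq_maxr N N')).
Qed.

Lemma dsum_rec : exists G : {linear U^(omega) -> V}, forall n u, G (dsum_in n u) = F n u.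
Proof.
pose bnd (w : U^(omega)) := projT1 (cid (dsum_finP w)).
have bndP w : bounded w (bnd w) by rewrite /bnd; case: cid.
pose G (w : U^(omega)) := \sum_(0 <= n < bnd w) F n (w n).
have GE w N : bounded w N -> G w = \sum_(0 <= n < N) F n (w n).
  by move=> wN; apply: sum_bounded_eq.
have Glin a x y : G (a *: x + y) = a *: G x + G y.
  pose N := maxn (bnd x) (bnd y).
  have xN : bounded x N by move=> n hn; apply: bndP; apply: leq_trans hn; rewrite leq_maxl.
  have yN : bounded y N by move=> n hn; apply: bndP; apply: leq_trans hn; rewrite leq_maxr.
  have xyN : bounded (a *: x + y) N by move=> n hn /=; rewrite xN ?yN // scaler0 addr0.
  rewrite (GE _ _ xyN) (GE _ _ xN) (GE _ _ yN) scaler_sumr -big_split /=.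
  by apply: eq_bigr => n _; rewrite linearP.
exists (mk_linear Glin) => n u /=.
have unN : bounded (dsum_in n u) n.+1 by move=> k hk; rewrite dsum_inE gtn_eqF.
rewrite (GE _ _ unN) big_nat_recr //= eqxx big1_seq ?add0r // => k.
by rewrite mem_index_iota => /andP [_ /andP [_ kn]]; rewrite ltn_eqF // linear0.
Qed.

End Recursor.

Lemma dmap_bij U V (f : {linear U -> V}) : bijective f -> bijective (dmap f).
Proof.
move=> /linear_inverse [g [fK gK]].
by exists (dmap g) => w; apply: dsum_eq => n; rewrite !dmapE ?fK ?gK.
Qed.

Lemma dmap_ker_exact A M (h : {linear A -> M}) : (forall m, exists a, h a = m) ->
  short_exact (dmap (ker_incl h)) (dmap h).
Proof.
move=> h_surj; split.
- apply: raddf_inj => k /(congr1 (fun v : A^(omega) => v _)) k0.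
  by apply: dsum_eq => n; apply: kerm_eq; exact: k0.
- move=> m; pose pre (x : M) := if x == 0 then 0 else projT1 (cid (h_surj x)).
  have preK x : h (pre x) = x.
    by rewrite /pre; case: eqP => [->|_]; [rewrite linear0 | case: cid].
  have pre_fin : fin_supp (fun n => pre (m n)).
    by case: (dsum_finP m) => N mN; exists N => n nN; rewrite /pre mN ?eqxx.
  by exists (DSumOmega pre_fin); apply: dsum_eq => n /=; rewrite preK.
- move=> w; split=> [hw|[k ->]]; last by apply: dsum_eq => n; exact: kervalP.
  have hwn n : h (w n) = 0 by have := congr1 (fun v : M^(omega) => v n) hw.
  have k_fin : fin_supp (fun n => Kerm (hwn n)).
    by case: (dsum_finP w) => N wN; exists N => n nN; apply: kerm_eq; exact: wN.
  by exists (DSumOmega k_fin); apply: dsum_eq.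
Qed.

End DirectSum.

End Modules.

Arguments dsum_in {S U} n.
Arguments dsum_proj {S U} n.

(** * Cotorsion pairs *)

Section CotorsionPair.
Variables (S : pzRingType) (CA CB : lmodType S -> Prop).
Hypothesis cot : cotorsion_pair CA CB.
Implicit Types A B M X Y Z : lmodType S.

Lemma cotorsion_split A B Z (i : {linear B -> Z}) (p : {linear Z -> A}) :
  CA A -> CB B -> short_exact i p -> exists s : {linear A -> Z}, cancel s p.
Proof.
by move=> hA hB [i_inj p_surj p_ker]; exact: (proj1 (proj1 cot A) hA B hB Z i p).
Qed.

Lemma cotorsion_lift A B Z Y (i : {linear B -> Z}) (p : {linear Z -> Y})
    (j : {linear A -> Y}) :
  CA A -> CB B -> short_exact i p -> exists s : {linear A -> Z}, forall a, p (s a) = j a.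
Proof.
move=> hA hB [i_inj p_surj p_ker].
(* [kerm d] is the pullback of [p] and [j]. *)
pose d := ((p \o fst) \- (j \o snd) : {linear (Z * A)%type -> Y}).
have d0 x : d x = 0 -> p x.1 = j x.2 by move/eqP; rewrite subr_eq0 => /eqP.
pose pr := (snd \o ker_incl d : {linear kerm d -> A}).
have [ip ipE] : exists ip : {linear B -> kerm d}, forall b, kerval (ip b) = (i b, 0).
  apply: (corestrict (@ker_incl_inj _ _ _ d) (g := lin_inl Z A \o i)) => b.
  have ib0 : d (i b, 0) = 0 by rewrite /= linear0 subr0; apply/p_ker; exists b.
  by exists (Kerm ib0).
have pullback_exact : short_exact ip pr.
  split.
  - by move=> b b' /(congr1 (fun x => (kerval x).1)) /=; rewrite !ipE; apply: i_inj.
  - move=> a; have [z za] := p_surj (j a).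
    have za0 : d (z, a) = 0 by rewrite /= za subrr.
    by exists (Kerm za0).
  - move=> x; split=> [/= x0|[b ->]]; last by rewrite /= ipE.
    have /p_ker [b eb] : p (kerval x).1 = 0 by rewrite d0 ?kervalP // x0 linear0.
    by exists b; apply: kerm_eq; rewrite ipE /= [kerval x]surjective_pairing eb x0.
have [s sK] := cotorsion_split hA hB pullback_exact.
exists (fst \o ker_incl d \o s : {linear A -> Z}) => a /=.
by rewrite d0 ?kervalP //; exact: (congr1 j (sK a)).
Qed.

Lemma regular_in_left : CA S^o.
Proof.
apply/(proj1 cot) => B hB X i p _ p_surj _.
have [x1 px1] := p_surj 1.
by exists (scalev x1) => r; rewrite /= linearZ px1; exact: mulr1.
Qed.

Lemma precover_surj A M (h : {linear A -> M}) : is_precover CA h ->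
  forall m, exists a, h a = m.
Proof.
case=> _ h_lift m; have [g gP] := h_lift _ (scalev m) regular_in_left.
by exists (g 1); rewrite gP /= scale1r.
Qed.

Lemma left_ext_closed A A' Y (j : {linear A -> Y}) (q : {linear Y -> A'}) :
  CA A -> CA A' -> short_exact j q -> CA Y.
Proof.
move=> hA hA' jq; apply/(proj1 cot) => B hB Z i p i_inj p_surj p_ker.
have ip : short_exact i p by split.
have [s sj] := cotorsion_lift j hA hB ip.
have [q' ex'] := coker_lift_exact jq ip sj.
have [t tK] := cotorsion_split hA' hB ex'.
have [r rK] := section_retraction ex' tK.
have [s' s'K] := retraction_section ip (r := r \o coker_proj s) rK.
by exists s'.
Qed.

Lemma wakamatsu A M (h : {linear A -> M}) : is_cover CA h -> CB (kerm h).
Proof.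
move=> [[hA h_lift] h_min]; apply/(proj2 cot) => A' hA' X i p i_inj p_surj p_ker.
have ip : short_exact i p by split.
(* Push [0 -> kerm h -> X -> A' -> 0] out along [kerm h ⊆ A]. *)
set k := ker_incl h; set pi := coker_proj (pushout_rel k i).
have [q jq] := pushout_exact k ip.
have hY := left_ext_closed hA hA' jq.
have h'0 v : pi v = 0 -> (h \o fst) v = 0 by move=> /coker_proj_eq0 [u ->]; exact: kervalP.
have [h' h'P] := factor_epi (@coker_proj_surj _ _ _ (pushout_rel k i)) h'0.
have [t tP] := h_lift _ h' hY.
have t_over : endo_over h (t \o pi \o lin_inl A X) by move=> a; rewrite /= tP h'P.
have [u [tu ut]] := linear_inverse (h_min _ t_over).
have u_over : endo_over h u := endo_over_inv t_over ut.
have r_ker x : h (u (t (pi (0, x)))) = 0 by rewrite u_over tP h'P /= linear0.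
have [r rP] := corestrict (@ker_incl_inj _ _ _ h) (g := u \o t \o pi \o lin_inr A X)
  (fun x => ex_intro _ (Kerm (r_ker x)) erefl).
have rK : cancel i r.
  move=> y; apply: ker_incl_inj; rewrite rP; change (u (t (pi (0, i y))) = k y).
  have -> : pi (0, i y) = pi (k y, 0).
    apply/coker_pi_eq; exists (- y).
    by apply: injective_projections; rewrite /= ?linearN ?opprK ?sub0r ?subr0.
  exact: tu.
have [s sK] := retraction_section ip rK.
by exists s.
Qed.

Lemma left_dsum_closed A : CA A -> CA A^(omega).
Proof.
move=> hA; apply/(proj1 cot) => B hB Z i p i_inj p_surj p_ker.
have ip : short_exact i p by split.
have [s sP] := choice (fun n => cotorsion_lift (dsum_in n) hA hB ip).
have [G GP] := dsum_rec s.
exists G; apply: (dsum_lin_ext (f := p \o G) (g := idfun)) => n a /=.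
by rewrite GP sP.
Qed.

Lemma special_precover B X Y (i : {linear B -> X}) (p : {linear X -> Y}) :
  CA X -> CB B -> short_exact i p -> is_precover CA p.
Proof. by move=> hX hB ip; split=> // A' f hA'; apply: cotorsion_lift hB ip. Qed.

Lemma dsum_precover A M (h : {linear A -> M}) :
  (forall B, CB B -> CB B^(omega)) -> is_cover CA h -> is_precover CA (dmap h).
Proof.
move=> sumB hcov; apply: (special_precover (i := dmap (ker_incl h))).
- exact: left_dsum_closed (hcov.1.1).
- exact/sumB/wakamatsu.
- exact/dmap_ker_exact/precover_surj/hcov.1.
Qed.

End CotorsionPair.

(** * Endomorphisms over [h^(omega)] *)

Section DsumEndo.
Variables (S : pzRingType) (A M : lmodType S) (h : {linear A -> M}).

Lemma dsum_endo_coord (rho : {linear A^(omega) -> A^(omega)}) :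
  endo_over (dmap h) rho -> forall w n, h (rho w n) = h (w n).
Proof. by move=> rho_over w n; have := congr1 (fun v : M^(omega) => v n) (rho_over w). Qed.

Section MinimalCover.
Hypothesis h_min : forall g : {linear A -> A}, endo_over h g -> bijective g.

Lemma dsum_endo_diag_bij (rho : {linear A^(omega) -> A^(omega)}) n :
  endo_over (dmap h) rho -> bijective (dsum_proj n \o rho \o dsum_in n).
Proof.
move=> rho_over; apply: h_min => a; change (h (rho (dsum_in n a) n) = h a).
by rewrite dsum_endo_coord // dsum_inE eqxx.
Qed.

Lemma dsum_endo_clear_coord (rho : {linear A^(omega) -> A^(omega)}) n q :
  endo_over (dmap h) rho -> rho q = 0 ->
  exists rho' : {linear A^(omega) -> A^(omega)},
    endo_over (dmap h) rho' /\ rho' (q - dsum_in n (q n)) = 0.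
Proof.
move=> rho_over rhoq.
have [u [fu uf]] := linear_inverse (dsum_endo_diag_bij n rho_over).
have u_over : endo_over h u.
  apply: endo_over_inv uf => a; change (h (rho (dsum_in n a) n) = h a).
  by rewrite dsum_endo_coord // dsum_inE eqxx.
(* [g x = x + ι_n (u ((x - rho x) n))] with [u] inverse to the diagonal block
   [rho_nn]; it maps [q - ι_n (q n)] back to [q]. *)
pose g := (idfun \+ (dsum_in n \o u \o dsum_proj n \o (idfun \- rho))
           : {linear A^(omega) -> A^(omega)}).
have g_over : endo_over (dmap h) g.
  move=> x; apply: dsum_eq => k; rewrite !dmapE /= linearD.
  case: eqP => [->|_]; last by rewrite linear0 addr0.
  by rewrite u_over linearB dsum_endo_coord // subrr addr0.
set q' := q - dsum_in n (q n).
have q'n : (q' - rho q') n = (dsum_proj n \o rho \o dsum_in n) (q n).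
  by rewrite /q' linearB rhoq sub0r !dsum_subE dsum_oppE dsum_inE eqxx subrr sub0r opprK.
have gq : g q' = q.
  by change (q' + dsum_in n (u ((q' - rho q') n)) = q); rewrite q'n fu subrK.
exists (rho \o g); split=> [x|]; first exact: etrans (rho_over _) (g_over x).
by change (rho (g q') = 0); rewrite gq.
Qed.

Lemma dsum_endo_inj (rho : {linear A^(omega) -> A^(omega)}) :
  endo_over (dmap h) rho -> injective rho.
Proof.
move=> rho_over; apply: raddf_inj => q rhoq; case: (dsum_finP q) => N.
elim: N rho rho_over q rhoq => [|N IH] rho rho_over q rhoq qN.
  by apply: dsum_eq => n; exact: qN.
have [rho' [rho'_over rho'q']] := dsum_endo_clear_coord N rho_over rhoq.
have q'N : bounded (q - dsum_in N (q N)) N.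
  move=> n; rewrite dsum_subE dsum_inE leq_eqVlt => /orP [/eqP ->|Nn].
    by rewrite eqxx subrr.
  by rewrite (gtn_eqF Nn) subr0 qN.
have qE : q = dsum_in N (q N).
  by apply/eqP; rewrite -subr_eq0 (IH _ rho'_over _ rho'q' q'N).
have qN0 : q N = 0.
  apply: (bij_inj (dsum_endo_diag_bij N rho_over)); rewrite linear0.
  by change (rho (dsum_in N (q N)) N = 0); rewrite -qE rhoq.
by rewrite qE qN0 linear0.
Qed.

End MinimalCover.

Lemma locally_split_ker0 :
  (forall e : {linear A^(omega) -> A^(omega)}, endo_over (dmap h) e -> bijective e) ->
  kernel_locally_split h -> forall x, h x = 0 -> x = 0.
Proof.
move=> dmap_min h_ls x hx; have [g [hg gx]] := h_ls x hx.
pose th := (idfun \- dshift g : {linear A^(omega) -> A^(omega)}).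
have th_over : endo_over (dmap h) th.
  move=> w; apply: dsum_eq => -[|n] /=; last by rewrite linearB hg subr0.
  by rewrite linearB linear0 subr0.
have [w thw] : exists w, th w = dsum_in 0 x.
  by case: (dmap_min th th_over) => th' _ th'K; exists (th' (dsum_in 0 x)).
have wx n : w n = x.
  elim: n => [|n IH].
    by have := congr1 (fun v : A^(omega) => v 0%N) thw; rewrite /= subr0.
  have := congr1 (fun v : A^(omega) => v n.+1) thw; rewrite /= IH gx.
  by move/eqP; rewrite subr_eq0 => /eqP.
by case: (dsum_finP w) => N wN; rewrite -(wx N) wN.
Qed.

End DsumEndo.

Section CoverCriteria.
Variables (S : pzRingType) (CA : lmodType S -> Prop).
Implicit Types A C M N : lmodType S.

Lemma precover_is_cover C N (c : {linear C -> N}) A (h : {linear A -> N}) :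
  is_cover CA c -> is_precover CA h ->
  (forall e : {linear A -> A}, endo_over h e -> injective e) -> is_cover CA h.
Proof.
move=> [[hC c_lift] c_min] [hA h_lift] h_inj; split=> [|e he]; first by split.
have [phi phiP] := c_lift A h hA.
have [psi psiP] := h_lift C c hC.
have phi_inj : injective phi.
  by apply: (@inj_compr _ _ _ psi); apply: h_inj => a; rewrite /= psiP phiP.
apply: inj_surj_bij (h_inj e he) _ => a.
have e_over : endo_over c (phi \o e \o psi) by move=> y; rewrite /= phiP he psiP.
have [chi _ chiK] := c_min _ e_over.
by exists (psi (chi (phi a))); apply: phi_inj; exact: chiK.
Qed.

Lemma bij_cover A M (h : {linear A -> M}) : CA A -> bijective h -> is_cover CA h.
Proof.
move=> hA h_bij; have [h' [hK h'K]] := linear_inverse h_bij; split.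
  by split=> // A' f _; exists (h' \o f) => x; exact: h'K.
move=> g hg; have g_id x : g x = x by apply: (bij_inj h_bij); exact: hg.
by exists g => x; rewrite !g_id.
Qed.

End CoverCriteria.

Theorem proposition5p1 (R : pzRingType)
  (CA CB : rmodType R -> Prop)
  (Hcot : cotorsion_pair CA CB)
  (Hsum : forall B : rmodType R, CB B -> CB (B^(omega)))
  (A M : rmodType R) (h : {linear A -> M})
  (Hcov : is_cover CA h) :
  is_iso h <-> (kernel_locally_split h /\ has_cover CA (M^(omega))).
Proof.
split=> [h_bij | [h_ls [C [c c_cov]]]].
  split.
    move=> x hx; have x0 : x = 0 by apply: (bij_inj h_bij); rewrite hx linear0.
    by exists \0; split=> [y|]; [exact: linear0 | rewrite x0].
  exists A^(omega), (dmap h); apply: bij_cover (dmap_bij h_bij).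
  apply: (left_dsum_closed Hcot); exact: Hcov.1.1.
have dmap_cov : is_cover CA (dmap h).
  apply: precover_is_cover c_cov (dsum_precover Hcot Hsum Hcov) _.
  exact: dsum_endo_inj Hcov.2.
apply: inj_surj_bij (precover_surj Hcot Hcov.1).
exact/raddf_inj/(locally_split_ker0 dmap_cov.2 h_ls).
Qed.
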